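(* If $K$ is a degenerate CMI, i.e. $K=(\cdot,\langle\ \rangle)$, then $(\cdot,\langle\ \rangle)$ is the only sub-CMI of $K$.
   Context: Setting: $X_1,\dots,X_n$ jointly distributed discrete random variables with $H(X_i)<\infty$; distribution unspecified. $X_\alpha=(X_i,i\in\alpha)$, $X_\emptyset$ constant. A CMI is $K=(C,\langle Q_1,\dots,Q_k\rangle)$, $k\ge0$, $C\subseteq\{1,\dots,n\}$, $\langle\cdot\rangle$ an unordered multiset of subsets; valid (for a given distribution) if $\sum_iH(X_{Q_i}|X_C)-H(X_{Q_1},\dots,X_{Q_k}|X_C)=0$. Empty members may be deleted. Degenerate = valid for every distribution; all degenerate CMIs are identified and written $(\cdot,\langle\ \rangle)$. $\mathrm{pur}(K)=(C,\langle Q_i\setminus C:Q_i\setminus C\ne\emptyset\rangle)$. For pure $K$: $\mathbb I_K$ = indices lying in at least two members of the collection if $k\ge2$, else $\emptyset$; $P_1,\dots,P_t$ the nonempty sets among $Q_i\setminus\mathbb I_K$; $\mathrm{can}(K)=(\cdot,\langle\ \rangle)$ if $k\le1$, $(C,\langle\mathbb I_K,\mathbb I_K\rangle)$ if $k\ge2,\mathbb I_K\ne\emptyset,t\le1$, $(C,\langle P_1..P_t\rangle)$ if $k\ge2,\mathbb I_K=\emptyset$, $(C,\langle\mathbb I_K,\mathbb I_K,P_1..P_t\rangle)$ if $k\ge2,\mathbb I_K\ne\emptyset,t\ge2$. For general $K$, $\mathbb I_K$ is the repeated-index set of $\mathrm{pur}(K)$ and $\mathrm{can}(\mathrm{pur}(K))$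 is written $(C,\langle\mathbb I_K,\mathbb I_K,P_i,1\le i\le t\rangle)$ (copies of $\mathbb I_K$ omitted if empty; for degenerate $K$ this means $\mathbb I_K=\emptyset$, $t\in\{0,1\}$, $C$ arbitrary). $P=\bigcup_iP_i$, $S=C\cup P$. $R_K^{K'}$: with $\mathrm{can}(\mathrm{pur}(K'))=(C',\langle\mathbb I_{K'},\mathbb I_{K'},P'_j,1\le j\le s\rangle)$, $D=\mathbb I_{K'}\setminus\mathbb I_K$ and $T_1,\dots,T_u$ the nonempty sets among $P'_j\setminus\mathbb I_K$: $R_K^{K'}=(\cdot,\langle\ \rangle)$ if $D=\emptyset,u\le1$; $(C'\setminus\mathbb I_K,\langle T_1..T_u\rangle)$ if $D=\emptyset,u\ge2$; $(C'\setminus\mathbb I_K,\langle D,D\rangle)$ if $D\ne\emptyset,u\le1$; $(C'\setminus\mathbb I_K,\langle D,D,T_1..T_u\rangle)$ if $D\ne\emptyset,u\ge2$. Sub-CMI: with $K''=R_K^{K'}$, $\mathrm{can}(\mathrm{pur}(K''))=(C'',\langle\mathbb I_{K''},\mathbb I_{K''},P''_j,1\le j\le r\rangle)$, $P''=\bigcup_jP''_j$, $K'$ is a sub-CMI of $K$ if: (i) $K'=(\cdot,\langle\ \rangle)$; or (ii) $\mathrm{can}(\mathrm{pur}(K''))=(\cdot,\langle\ \rangle)$ and $C\subseteq C'$; or (iii) $\mathrm{can}(\mathrm{pur}(K''))\ne(\cdot,\langle\ \rangle)$, $\mathbb I_{K''}=\emptyset$, $P''\subseteq P$, $C\subseteq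 C''\subseteq S\setminus P''$, and whenever $m_1\in P''_{j_1}$, $m_2\in P''_{j_2}$ with $j_1\ne j_2$, then $m_1\in P_{i_1}$, $m_2\in P_{i_2}$ with $i_1\ne i_2$. *)

From HB Require Import structures.
From mathcomp Require Import all_boot all_order all_algebra.
From mathcomp Require Import boolp classical_sets reals ereal esum exp.
From mathcomp Require Import Rstruct.
Set Implicit Arguments. Unset Strict Implicit. Unset Printing Implicit Defensive.
Import Order.TTheory GRing.Theory Num.Theory.
Local Open Scope ring_scope.
Local Notation set0 := finset.set0.

(* Semantics: jointly distributed discrete random variables X_1..X_n.        *)
(* Indices are 'I_n.  Every countable alphabet embeds into nat, and entropy   *)
(* only depends on the joint law, so a joint distribution is a probability   *)
(* mass function on outcomes x : {ffun 'I_n -> nat} (x i = value of X_i).    *)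

Definition RR := Rdefinitions.R.

Definition outcome (n : nat) := {ffun 'I_n -> nat}.

(* the value of X_A = (X_i, i in A), padded with 0 outside A *)
Definition restr n (A : {set 'I_n}) (x : outcome n) : outcome n :=
  [ffun i => if i \in A then x i else 0%N].

Definition is_pmf n (p : outcome n -> RR) : Prop :=
  (forall x, 0 <= p x) /\ (\esum_(x in [set: outcome n]) (p x)%:E = 1)%E.

Definition marg n (p : outcome n -> RR) (A : {set 'I_n}) (y : outcome n) : RR :=
  fine (\esum_(x in [set x | restr A x = y]) (p x)%:E).

Definition entropy n (p : outcome n -> RR) (A : {set 'I_n}) : \bar RR :=
  \esum_(y in [set: outcome n]) (- (marg p A y * ln (marg p A y)))%:E.

Definition admissible n (p : outcome n -> RR) : Prop :=
  is_pmf p /\ forall i : 'I_n, (entropy p [set i] < +oo)%E.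

(* conditional entropy H(X_A | X_C) = H(X_{A u C}) - H(X_C) (all finite for
   admissible p, so computed through fine) *)
Definition centropy n (p : outcome n -> RR) (A C : {set 'I_n}) : RR :=
  fine (entropy p (A :|: C)) - fine (entropy p C).

(* CMIs: K = (C, <Q_1,...,Q_k>), the multiset represented by a sequence.      *)

Definition CMI (n : nat) := ({set 'I_n} * seq {set 'I_n})%type.

Definition valid n (p : outcome n -> RR) (K : CMI n) : Prop :=
  \sum_(Q <- K.2) centropy p Q K.1
    - centropy p (\bigcup_(Q <- K.2) Q) K.1 = 0.

Definition degenerate n (K : CMI n) : Prop :=
  forall p : outcome n -> RR, admissible p -> valid p K.

(* a representative of the degenerate CMI ( . , < > ) *)
Definition degCMI n : CMI n := (set0, [::]).

Definition pur n (K : CMI n) : CMI n :=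
  (K.1, [seq Q :\: K.1 | Q <- K.2 & Q :\: K.1 != set0]).

Definition rep n (Qs : seq {set 'I_n}) : {set 'I_n} :=
  if (2 <= size Qs)%N then finset (fun i : 'I_n => (2 <= count (fun Q : {set 'I_n} => i \in Q) Qs)%N)
  else set0.

Definition Pseq n (I : {set 'I_n}) (Qs : seq {set 'I_n}) : seq {set 'I_n} :=
  [seq Q :\: I | Q <- Qs & Q :\: I != set0].

Definition can n (K : CMI n) : CMI n :=
  let I := rep K.2 in
  let Ps := Pseq I K.2 in
  if (size K.2 <= 1)%N then degCMI n
  else if I == set0 then (K.1, Ps)
  else if (size Ps <= 1)%N then (K.1, [:: I; I])
  else (K.1, I :: I :: Ps).

(* the data of can(pur(K)) written as (C, <I_K, I_K, P_i, 1 <= i <= t>):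
   I_K, the list of the P_i, and C *)
Definition canI n (K : CMI n) : {set 'I_n} := rep (pur K).2.

Definition canP n (K : CMI n) : seq {set 'I_n} :=
  let Qs := (pur K).2 in
  let I := rep Qs in
  let Ps := Pseq I Qs in
  if [&& (2 <= size Qs)%N, I != set0 & (size Ps <= 1)%N] then [::] else Ps.

Definition canC n (K : CMI n) : {set 'I_n} := (pur K).1.

Definition RKK n (K K' : CMI n) : CMI n :=
  let IK := canI K in
  let D := canI K' :\: IK in
  let Ts := [seq P :\: IK | P <- canP K' & P :\: IK != set0] in
  let C := canC K' :\: IK in
  if D == set0 then
    (if (size Ts <= 1)%N then degCMI n else (C, Ts))
  else if (size Ts <= 1)%N then (C, [:: D; D])
  else (C, D :: D :: Ts).

Definition bigU n (s : seq {set 'I_n}) : {set 'I_n} := \bigcup_(X <- s) X.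

Definition subCMI n (K K' : CMI n) : Prop :=
  let K'' := RKK K K' in
  let C := canC K in
  let Ps := canP K in
  let P := bigU Ps in
  let S := C :|: P in
  let C'' := canC K'' in
  let P''s := canP K'' in
  let P'' := bigU P''s in
  degenerate K'
  \/ (degenerate (can (pur K'')) /\ C \subset canC K')
  \/ (~ degenerate (can (pur K'')) /\ canI K'' = set0 /\
        P'' \subset P /\ C \subset C'' /\ C'' \subset S :\: P'' /\
        forall (j1 j2 : nat) (m1 m2 : 'I_n),
          (j1 < size P''s)%N -> (j2 < size P''s)%N -> j1 <> j2 ->
          m1 \in nth set0 P''s j1 -> m2 \in nth set0 P''s j2 ->
          exists i1 i2 : nat, [/\ (i1 < size Ps)%N, (i2 < size Ps)%N, i1 <> i2,
            m1 \in nth set0 Ps i1 & m2 \in nth set0 Ps i2]).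

(* A CMI is degenerate exactly when its purification has at most one member.
   Given two members Q_a, Q_b of pur K, pick m_a in Q_a \ C and m_b in Q_b \ C
   and let X_{m_a} = X_{m_b} be a single fair coin, all other variables being
   constant: then H(X_Q | X_C) is ln 2 for Q = Q_a and Q = Q_b, so the sum is at
   least 2 ln 2, whereas the joint conditional entropy is only ln 2.
   Hence a degenerate K has I_K empty and at most one P_i.  With I_K empty,
   R_K^{K'} is can(pur K'), which is degenerate iff K' is, so case (ii) forces
   K' to be degenerate; case (iii) needs two distinct P_i, which do not exist. *)

From mathcomp Require Import all_boot.
From mathcomp Require Import all_order all_algebra.
From mathcomp Require Import classical_sets reals ereal esum exp.
From mathcomp Require Import Rstruct.
From mathcomp Require Import lra zify.
(* Re-imported so that their names shadow the homonymous classical_sets ones. *)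
From mathcomp Require Import fintype finset.
Set Implicit Arguments. Unset Strict Implicit. Unset Printing Implicit Defensive.
Import Order.TTheory GRing.Theory Num.Theory.
Local Open Scope ring_scope.

Lemma setDKU (T : finType) (A B : {set T}) : (A :\: B) :|: B = A :|: B.
Proof. by apply/setP => x; rewrite !inE; case: (x \in B); rewrite ?orbT ?andbT. Qed.

Section PureCMI.
Variable n : nat.
Implicit Types (X : CMI n) (C : {set 'I_n}) (Qs : seq {set 'I_n}).

Definition is_pure X := all (fun Q => (Q != set0) && [disjoint Q & X.1]) X.2.

Lemma pur_is_pure X : is_pure (pur X).
Proof.
case: X => C Qs; rewrite /is_pure /=; elim: Qs => [|Q Qs IH] //=.
case: ifP => // QC /=; rewrite QC IH andbT.
by rewrite -setI_eq0 setIDAC setD_eq0 subsetIr.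
Qed.

Lemma pur_id X : is_pure X -> pur X = X.
Proof.
case: X => C Qs; rewrite /is_pure /pur /= => pure_Qs; congr pair.
elim: Qs pure_Qs => [|Q Qs IH] //= /andP[/andP[Q0 /setDidPl QC] /IH].
by rewrite QC Q0 /= QC => ->.
Qed.

End PureCMI.

Section ESumTwoPoints.
Variables (R : realType) (T : choiceType).

Lemma esum_delta (a : T) (c : \bar R) : (0 <= c)%E ->
  \esum_(x in [set: T]) (if x == a then c else 0%E) = c.
Proof.
move=> c_ge0; rewrite -[RHS](@esum_set1 R T a (fun _ => c)) //.
by rewrite (esum_mkcond [set a]); apply: eq_esum => x _; rewrite classical_sets.in_set1.
Qed.

Lemma esum_two_points (S : set T) (f : T -> \bar R) (a b : T) : a != b ->
    (forall x, (0 <= f x)%E) -> (forall x, x != a -> x != b -> f x = 0%E) ->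
  \esum_(x in S) f x =
    ((if a \in S then f a else 0) + (if b \in S then f b else 0))%E.
Proof.
move=> neq_ab f_ge0 f_out; rewrite esum_mkcond.
set fa := if a \in S then f a else 0%E; set fb := if b \in S then f b else 0%E.
have fa_ge0 : (0 <= fa)%E by rewrite /fa; case: ifP.
have fb_ge0 : (0 <= fb)%E by rewrite /fb; case: ifP.
transitivity (\esum_(x in [set: T])
    ((if x == a then fa else 0) + (if x == b then fb else 0))%E).
  apply: eq_esum => x _; have [->|xa] := eqVneq x a.
    by rewrite (negbTE neq_ab) adde0.
  have [->|xb] := eqVneq x b; first by rewrite add0e.
  by rewrite f_out // add0e; case: ifP.
by rewrite esumD ?esum_delta // => x _; case: ifP.
Qed.

End ESumTwoPoints.

Lemma in_fiberE (T : Type) (U : eqType) (f : T -> U) (y : U) (x : T) :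
  (x \in [set z | f z = y]%classic) = (f x == y).
Proof. by apply/idP/eqP; rewrite in_setE. Qed.

Section CoinDistribution.
Variables (n : nat) (m1 m2 : 'I_n).

Definition zero_outcome : outcome n := [ffun _ => 0%N].
Definition coin_outcome : outcome n :=
  [ffun i => if (i == m1) || (i == m2) then 1%N else 0%N].

Definition coin_pmf (x : outcome n) : RR :=
  if (x == zero_outcome) || (x == coin_outcome) then 2^-1 else 0.

Definition meets (A : {set 'I_n}) := (m1 \in A) || (m2 \in A).

Lemma zero_neq_coin : zero_outcome != coin_outcome.
Proof. by apply/eqP => /ffunP/(_ m1); rewrite !ffunE eqxx. Qed.

Lemma restr_zero A : restr A zero_outcome = zero_outcome.
Proof. by apply/ffunP => i; rewrite !ffunE; case: ifP. Qed.

Lemma restr_coin_eq0 A : (restr A coin_outcome == zero_outcome) = ~~ meets A.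
Proof.
apply/eqP/idP => [/ffunP e|]; last first.
  rewrite negb_or => /andP[m1A m2A]; apply/ffunP => i; rewrite !ffunE.
  case: ifPn => // iA; have /negPf-> : i != m1 by apply: contraNneq m1A => <-.
  by have /negPf-> : i != m2 by apply: contraNneq m2A => <-.
by apply/negP => /orP[] mA; [move: (e m1) | move: (e m2)]; rewrite !ffunE mA eqxx ?orbT.
Qed.

Lemma half_add_half : 2^-1 + 2^-1 = 1 :> RR.
Proof. lra. Qed.

Lemma coin_pmf_ge0 x : 0 <= coin_pmf x.
Proof. by rewrite /coin_pmf; case: ifP. Qed.

Lemma esum_coin_pmf (S : set (outcome n)) :
  \esum_(x in S) (coin_pmf x)%:E =
    ((if zero_outcome \in S then 2^-1 else 0) + (if coin_outcome \in S then 2^-1 else 0))%:E.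
Proof.
rewrite (esum_two_points S zero_neq_coin).
- by rewrite /coin_pmf !eqxx orbT /=; do 2!case: ifP.
- by move=> x; rewrite lee_fin coin_pmf_ge0.
- by move=> x x0 x1; rewrite /coin_pmf (negbTE x0) (negbTE x1).
Qed.

Lemma marg_coin A y : marg coin_pmf A y =
  (if y == zero_outcome then 2^-1 else 0) + (if y == restr A coin_outcome then 2^-1 else 0).
Proof.
by rewrite /marg esum_coin_pmf !in_fiberE restr_zero ![_ == y]eq_sym.
Qed.

Lemma entropy_coin A : entropy coin_pmf A = (if meets A then ln 2 else 0)%:E.
Proof.
rewrite /entropy; have [mA|mA] := boolP (meets A); last first.
  apply: esum1 => y _; rewrite marg_coin; move: mA; rewrite -restr_coin_eq0 => /eqP ->.
  by case: ifP => _; rewrite ?addr0 ?mul0r ?oppr0 // half_add_half ln1 mulr0 oppr0.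
have neq_A : zero_outcome != restr A coin_outcome by rewrite eq_sym restr_coin_eq0 mA.
have half_term : - (2^-1 * ln (2^-1)) = 2^-1 * ln 2 :> RR by rewrite lnV ?posrE // mulrN opprK.
have half_ge0 : 0 <= 2^-1 * ln 2 :> RR by rewrite mulr_ge0 ?invr_ge0 ?ln_ge0 ?ler1n.
rewrite (esum_two_points _ neq_A).
- rewrite !classical_sets.in_setT !marg_coin !eqxx (negbTE neq_A) eq_sym (negbTE neq_A).
  rewrite addr0 add0r half_term.
  by rewrite -EFinD -mulrDl half_add_half mul1r.
- move=> y; rewrite lee_fin marg_coin.
  by do 2![case: eqP => _];
    rewrite ?addr0 ?add0r ?half_add_half ?ln1 ?mulr0 ?mul0r ?oppr0 ?half_term.
- by move=> y y0 y1; rewrite marg_coin (negbTE y0) (negbTE y1) addr0 mul0r oppr0.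
Qed.

Lemma coin_admissible : admissible coin_pmf.
Proof.
split; last by move=> i; rewrite entropy_coin ltry.
split; first exact: coin_pmf_ge0.
by rewrite esum_coin_pmf !classical_sets.in_setT half_add_half.
Qed.

Lemma meetsU A B : meets (A :|: B) = meets A || meets B.
Proof. by rewrite /meets !inE orbACA. Qed.

Lemma centropy_coin Q C : ~~ meets C ->
  centropy coin_pmf Q C = if meets Q then ln 2 else 0.
Proof.
move=> /negPf mC; rewrite /centropy !entropy_coin meetsU mC orbF /= subr0.
by case: ifP.
Qed.

End CoinDistribution.

Section Validity.
Variables (n : nat) (p : outcome n -> RR).
Implicit Types (X : CMI n) (A B C Q : {set 'I_n}) (Qs : seq {set 'I_n}).

Lemma centropy_sub0 Q C : Q \subset C -> centropy p Q C = 0.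
Proof. by move=> /setUidPr QC; rewrite /centropy QC subrr. Qed.

Lemma eq_centropy A B C : A :|: C = B :|: C -> centropy p A C = centropy p B C.
Proof. by rewrite /centropy => ->. Qed.

Lemma sum_centropy_pur C Qs :
  \sum_(Q <- (pur (C, Qs)).2) centropy p Q C = \sum_(Q <- Qs) centropy p Q C.
Proof.
elim: Qs => [|Q Qs IH] //=; rewrite big_cons -IH.
case: ifPn => [_|]; first by rewrite big_cons (eq_centropy (setDKU Q C)).
by rewrite negbK setD_eq0 => /centropy_sub0->; rewrite add0r.
Qed.

Lemma bigcup_pur_setU C Qs :
  (\bigcup_(Q <- (pur (C, Qs)).2) Q) :|: C = (\bigcup_(Q <- Qs) Q) :|: C.
Proof.
elim: Qs => [|Q Qs IH] //=; rewrite big_cons; apply/setP => x.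
move/setP/(_ x): IH; case: ifPn => [_|]; rewrite ?big_cons !inE.
  by case: (x \in C); rewrite ?orbT ?orbF ?andbT // => ->.
rewrite negbK setD_eq0 => /subsetP/(_ x) xQC ->.
by case: (x \in C) xQC; rewrite ?orbT ?orbF // => /contraFF->.
Qed.

Lemma valid_pur X : valid p (pur X) <-> valid p X.
Proof.
case: X => C Qs; rewrite /valid /= sum_centropy_pur.
by rewrite (eq_centropy (bigcup_pur_setU C Qs)).
Qed.

Lemma valid_size_le1 X : (size X.2 <= 1)%N -> valid p X.
Proof.
case: X => C [|Q []] //= _; rewrite /valid /=.
  by rewrite !big_nil centropy_sub0 ?sub0set ?subrr.
by rewrite !big_seq1 subrr.
Qed.

End Validity.

Section Degeneracy.
Variable n : nat.
Implicit Types X : CMI n.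

Lemma pure_not_degenerate X : is_pure X -> (1 < size X.2)%N -> ~ degenerate X.
Proof.
case: X => C [|Qa [|Qb Qs]] //; rewrite /is_pure /=.
move=> /and3P[/andP[/set0Pn[m1 m1Qa] dQa] /andP[/set0Pn[m2 m2Qb] dQb] _] _.
have mC : ~~ meets m1 m2 C by rewrite /meets (disjointFr dQa) ?(disjointFr dQb).
have mQa : meets m1 m2 Qa by rewrite /meets m1Qa.
have mQb : meets m1 m2 Qb by rewrite /meets m2Qb orbT.
have ln2_gt0 : 0 < ln (2 : RR) by rewrite ln_gt0 ?ltr1n.
move=> /(_ _ (coin_admissible m1 m2)); rewrite /valid /= !big_cons !centropy_coin //.
rewrite !meetsU mQa mQb /=.
have : 0 <= \sum_(Q <- Qs) centropy (coin_pmf m1 m2) Q C.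
  by apply: sumr_ge0 => Q _; rewrite centropy_coin //; case: ifP => // _; exact: ltW.
lra.
Qed.

Lemma degenerateE X : degenerate X <-> (size (pur X).2 <= 1)%N.
Proof.
split => [degX | small p _]; last exact/valid_pur/valid_size_le1.
rewrite leqNgt; apply/negP => big.
by apply: (pure_not_degenerate (pur_is_pure X) big) => p /degX/valid_pur.
Qed.

End Degeneracy.

Section CanonicalForm.
Variable n : nat.
Implicit Types (X K : CMI n) (C I : {set 'I_n}) (Qs : seq {set 'I_n}).

Lemma pure_nonempty X : is_pure X -> all (fun Q => Q != set0) X.2.
Proof. by move=> /allP pure_X; apply/allP => Q /pure_X /andP[]. Qed.

Lemma rep_size_le1 Qs : (size Qs <= 1)%N -> rep Qs = set0.
Proof. by rewrite /rep leqNgt => /negPf->. Qed.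

Lemma rep_subset_bigcup Qs : rep Qs \subset \bigcup_(Q <- Qs) Q.
Proof.
rewrite /rep; case: ifP => _; last exact: sub0set.
apply/subsetP => x; rewrite inE => two_le_count.
have /hasP[Q QQs xQ] : has (fun Q : {set 'I_n} => x \in Q) Qs.
  by rewrite has_count (leq_trans _ two_le_count).
by rewrite bigcup_seq; apply/bigcupP; exists Q.
Qed.

Lemma Pseq_set0 Qs : all (fun Q => Q != set0) Qs -> Pseq set0 Qs = Qs.
Proof.
rewrite /Pseq; elim: Qs => [|Q Qs IH] //= /andP[Q0 /IH].
by rewrite setD0 Q0 /= setD0 => ->.
Qed.

Lemma is_pure_Pseq I C Qs : is_pure (C, Qs) -> is_pure (C, Pseq I Qs).
Proof.
rewrite /is_pure /Pseq /=; elim: Qs => [|Q Qs IH] //= /andP[/andP[_ dQC] /IH].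
case: ifP => //= QI ->; rewrite QI andbT.
exact: disjointWl (subsetDl Q I) dQC.
Qed.

Lemma is_pure_canP X : is_pure (canC X, canP X).
Proof.
rewrite /canP /canC; case: ifP => // _.
by case: (pur X) (pur_is_pure X) => C Qs; apply: is_pure_Pseq.
Qed.

Lemma canP_canI0 X : canI X = set0 -> canP X = (pur X).2.
Proof.
rewrite /canP /canI => ->; rewrite eqxx andbF.
exact/Pseq_set0/pure_nonempty/pur_is_pure.
Qed.

Lemma can_is_pure X : is_pure X -> (1 < size X.2)%N ->
  is_pure (can X) /\ (1 < size (can X).2)%N.
Proof.
case: X => C Qs pure_X two_le_size; rewrite /can /= leqNgt two_le_size /=.
have dIC : [disjoint rep Qs & C].
  apply: disjointWl (rep_subset_bigcup Qs) _; rewrite bigcup_seq disjoint_sym.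
  apply: bigcup_disjoint => Q QQs; rewrite disjoint_sym.
  by case/andP: (allP pure_X Q QQs).
case: eqP => [->|/eqP I0]; first by rewrite Pseq_set0 ?(pure_nonempty pure_X).
have := is_pure_Pseq (rep Qs) pure_X.
by case: ifP => _ pure_P; rewrite /is_pure /= I0 dIC.
Qed.

Lemma degenerate_can_pur X : degenerate (can (pur X)) <-> degenerate X.
Proof.
rewrite !degenerateE; have [small|big] := leqP (size (pur X).2) 1.
  by rewrite /can small /=.
have [pure_can big_can] := can_is_pure (pur_is_pure X) big.
by rewrite (pur_id pure_can) leqNgt big_can.
Qed.

Lemma RKK_canI0 K K' : canI K = set0 -> RKK K K' = can (pur K').
Proof.
move=> IK0; rewrite /RKK IK0 !setD0 -/(Pseq set0 (canP K')).
rewrite Pseq_set0 ?(pure_nonempty (is_pure_canP K')) //.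
rewrite /canI /canP /canC /can; case: (pur K') (pur_is_pure K') => C Qs pure_Qs /=.
have Pseq0_Qs : Pseq set0 Qs = Qs := Pseq_set0 (pure_nonempty pure_Qs).
have [small|big] := leqP (size Qs) 1.
  by rewrite rep_size_le1 // eqxx /= Pseq0_Qs small.
case: eqP => [->|_] /=; first by rewrite Pseq0_Qs leqNgt big.
by case: (leqP (size (Pseq (rep Qs) Qs)) 1) => // big_P; rewrite leqNgt big_P.
Qed.

End CanonicalForm.

Theorem mainTheorem18 (n : nat) (K K' : CMI n) :
  degenerate K -> (subCMI K K' <-> degenerate K').
Proof.
move=> degK; split; last by left.
have small_K : (size (pur K).2 <= 1)%N by apply/degenerateE.
have IK0 : canI K = set0 by apply: rep_size_le1.
have small_PK : (size (canP K) <= 1)%N by rewrite (canP_canI0 IK0).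
case=> [//|[[deg_can _]|[ndeg_can [I0 [_ [_ [_ separated]]]]]]].
  by move: deg_can; rewrite (RKK_canI0 _ IK0) => /degenerate_can_pur/degenerate_can_pur.
set K'' := RKK K K' in ndeg_can I0 separated.
have big : (1 < size (canP K''))%N.
  rewrite (canP_canI0 I0) ltnNge; apply/negP => small.
  by apply/ndeg_can/(degenerate_can_pur K'')/degenerateE.
have member_P j : (j < size (canP K''))%N -> exists m, m \in nth set0 (canP K'') j.
  move=> lt_j; have /andP[/set0Pn] // := allP (is_pure_canP K'') _ (mem_nth set0 lt_j).
have [m1 m1P] := member_P 0%N (ltnW big); have [m2 m2P] := member_P 1%N big.
have neq01 : 0%N <> 1%N by [].
have [i1 [i2 [lt_i1 lt_i2 neq_i _ _]]] :=
  separated 0%N 1%N m1 m2 (ltnW big) big neq01 m1P m2P.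
lia.
Qed.
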